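(* Let $\lambda$ be a singular cardinal and let $\langle\lambda_i\mid i<\mathrm{cf}(\lambda)\rangle$ be a strictly increasing sequence of regular cardinals cofinal in $\lambda$. Let $\langle f_\alpha\mid\alpha<\lambda^+\rangle$ be a sequence of functions in $\prod_{i<\mathrm{cf}(\lambda)}\lambda_i$ that is unbounded with respect to $<^*$ and satisfies $f_\alpha<^*f_\beta$ for all $\alpha<\beta<\lambda^+$. Then for every $Z\subseteq\lambda^+$ with $|Z|=\lambda^+$, the set $$I_Z:=\{i<\mathrm{cf}(\lambda)\mid \sup\{\epsilon<\lambda_i\mid \sup\{\beta\in Z\mid f_\beta(i)=\epsilon\}=\lambda^+\}=\lambda_i\}$$ is cofinal in $\mathrm{cf}(\lambda)$.
   Context: For $f,g\in\prod_{i<\mathrm{cf}(\lambda)}\lambda_i$, $f<^*g$ means that the set $\{i<\mathrm{cf}(\lambda)\mid f(i)\ge g(i)\}$ is bounded in $\mathrm{cf}(\lambda)$. A family is unbounded with respect to $<^*$ if there is no single $g\in\prod_{i<\mathrm{cf}(\lambda)}\lambda_i$ with $f<^*g$ for all $f$ in the family. *)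

(* Ordinals are modelled as elements of an arbitrary
   (sufficiently large) well-ordered type (O, lt); every initial segment of a
   well-order is isomorphic to a unique von Neumann ordinal, so ordinal and
   cardinal notions below are the usual ones, read inside O. *)
From Stdlib Require Import Classical.

Section OrdinalNotions.
Variable O : Type.
Variable lt : O -> O -> Prop.

Definition le (x y : O) : Prop := lt x y \/ x = y.

Definition is_well_order : Prop :=
  well_founded lt /\
  (forall x y z, lt x y -> lt y z -> lt x z) /\
  (forall x y, lt x y \/ x = y \/ lt y x).

Definition below (a : O) : O -> Prop := fun x => lt x a.

Definition equipotent (A B : O -> Prop) : Prop :=
  exists g : O -> O,
    (forall x, A x -> B (g x)) /\
    (forall x y, A x -> A y -> g x = g y -> x = y) /\
    (forall y, B y -> exists x, A x /\ g x = y).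

Definition card_le (A B : O -> Prop) : Prop :=
  exists g : O -> O,
    (forall x, A x -> B (g x)) /\
    (forall x y, A x -> A y -> g x = g y -> x = y).

Definition is_cardinal (a : O) : Prop :=
  forall b, lt b a -> ~ equipotent (below b) (below a).

Definition is_limit (a : O) : Prop :=
  (exists x, lt x a) /\ (forall x, lt x a -> exists y, lt x y /\ lt y a).

Definition infinite_cardinal (a : O) : Prop := is_cardinal a /\ is_limit a.

Definition cofinal_in (X : O -> Prop) (a : O) : Prop :=
  (forall x, X x -> lt x a) /\ (forall b, lt b a -> exists x, X x /\ le b x).

Definition is_cf (a k : O) : Prop :=
  is_cardinal k /\
  (exists X, cofinal_in X a /\ equipotent X (below k)) /\
  (forall X, cofinal_in X a -> card_le (below k) X).

Definition regular_cardinal (a : O) : Prop := infinite_cardinal a /\ is_cf a a.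

Definition singular_cardinal (a : O) : Prop :=
  infinite_cardinal a /\ exists k, is_cf a k /\ lt k a.

Definition is_succ_cardinal (a m : O) : Prop :=
  is_cardinal m /\ lt a m /\ (forall n, is_cardinal n -> lt a n -> le m n).

Definition is_sup (S : O -> Prop) (s : O) : Prop :=
  (forall x, S x -> le x s) /\ (forall t, (forall x, S x -> le x t) -> le s t).

Definition lt_star (k : O) (f g : O -> O) : Prop :=
  exists j, lt j k /\ (forall i, lt i k -> le (g i) (f i) -> lt i j).

Definition in_prod (k : O) (ls : O -> O) (g : O -> O) : Prop :=
  forall i, lt i k -> lt (g i) (ls i).

End OrdinalNotions.

From Stdlib Require Import Classical ClassicalEpsilon.

(* Suppose [I_Z] is bounded by [b < κ].  For [b ≤ i < κ] the values [e < λ_i]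
   whose fibre [{β ∈ Z | f_β(i) = e}] is unbounded in [λ^+] are then bounded
   in [λ_i], say below [g(i)], so every fibre [(i, e)] with [e ≥ g(i)] is
   bounded in [λ^+], say by [c(i, e)].  A family [c] indexed by the pairs
   [(i, e)] with [e < λ_i] is bounded in [λ^+]: otherwise
   [G(i) := sup {f_{c(k,e)}(i) | k < i, e < λ_k}], which is below [λ_i] by
   regularity as soon as [i < λ_i], would bound the scale (this replaces the
   regularity of [λ^+]).  For [d] above all [c(i, e)], every [β ∈ Z] above [d]
   satisfies [f_β(i) < g(i)] for [i ≥ b], so [g] bounds the scale. *)

Section Ordinals.

Variables (O : Type) (lt : O -> O -> Prop).

Lemma card_le_trans A B C : card_le O A B -> card_le O B C -> card_le O A C.
Proof.
  intros [g [Hg Hg_inj]] [h [Hh Hh_inj]]. exists (fun x => h (g x)). split.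
  - auto.
  - intros x y Hx Hy E. auto.
Qed.

Lemma equipotent_card_le A B : equipotent O A B -> card_le O A B.
Proof. intros [g [Hg [Hg_inj _]]]. exists g. auto. Qed.

Lemma equipotent_sym A B : equipotent O A B -> equipotent O B A.
Proof.
  intros [g [Hg [Hg_inj Hg_onto]]].
  destruct (choice (fun y x => B y -> A x /\ g x = y)) as [h Hh].
  { intro y. destruct (classic (B y)) as [By|HnB].
    - destruct (Hg_onto y By) as [x Hx]. exists x. auto.
    - exists y. tauto. }
  exists h. split; [|split].
  - intros y By. apply (Hh y By).
  - intros y1 y2 B1 B2 E. destruct (Hh y1 B1) as [_ E1]. destruct (Hh y2 B2) as [_ E2].
    rewrite <- E1, <- E2, E. reflexivity.
  - intros x Ax. exists (g x). split; auto.
    destruct (Hh (g x) (Hg x Ax)) as [Ahgx E]. auto.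
Qed.

(* Dedekind's proof of Schröder–Bernstein: apply [e] on the [e]-orbits of the
   points of [A] outside [B], and the identity elsewhere. *)
Lemma equipotent_of_subset_card_le A B :
  (forall x, B x -> A x) -> card_le O A B -> equipotent O A B.
Proof.
  intros HBA [e [He He_inj]].
  set (C := fun x => exists n z, A z /\ ~ B z /\ x = Nat.iter n e z).
  assert (HCA : forall x, C x -> A x).
  { intros x [n [z [Az [_ ->]]]]. induction n; simpl; auto. }
  assert (HCe : forall x, C x -> C (e x)).
  { intros x [n [z [Az [HnB ->]]]]. exists (S n), z. auto. }
  exists (fun x => if excluded_middle_informative (C x) then e x else x).
  split; [|split].
  - intros x Ax. destruct (excluded_middle_informative (C x)) as [Cx|HnC]; auto.
    apply NNPP. intro HnB. apply HnC. exists 0, x. auto.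
  - intros x y Ax Ay.
    destruct (excluded_middle_informative (C x)) as [Cx|HnCx];
    destruct (excluded_middle_informative (C y)) as [Cy|HnCy]; intro E; auto.
    + exfalso. apply HnCy. rewrite <- E. auto.
    + exfalso. apply HnCx. rewrite E. auto.
  - intros y By. destruct (classic (C y)) as [[[|n] [z [Az [HnB Ey]]]]|HnC].
    + simpl in Ey. subst. contradiction.
    + assert (Cx : C (Nat.iter n e z)) by (exists n, z; auto).
      exists (Nat.iter n e z). split; auto.
      destruct (excluded_middle_informative (C (Nat.iter n e z))); [|contradiction].
      rewrite Ey. reflexivity.
    + exists y. split; auto.
      destruct (excluded_middle_informative (C y)); [contradiction|auto].
Qed.

Hypothesis Hwo : is_well_order O lt.

Lemma lt_irrefl x : ~ lt x x.
Proof.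
  destruct Hwo as [Hwf _]. induction (Hwf x) as [x _ IH]. intro H. exact (IH x H H).
Qed.

Lemma lt_trans x y z : lt x y -> lt y z -> lt x z.
Proof. destruct Hwo as [_ [Htrans _]]. apply Htrans. Qed.

Lemma lt_trichotomy x y : lt x y \/ x = y \/ lt y x.
Proof. destruct Hwo as [_ [_ Htri]]. apply Htri. Qed.

Lemma le_of_not_lt x y : ~ lt x y -> le O lt y x.
Proof.
  intro H. destruct (lt_trichotomy x y) as [h|[h|h]];
    [contradiction | right; auto | left; auto].
Qed.

Lemma le_lt_trans x y z : le O lt x y -> lt y z -> lt x z.
Proof. intros [h| <-] h2; [exact (lt_trans x y z h h2) | exact h2]. Qed.

Lemma lt_le_trans x y z : lt x y -> le O lt y z -> lt x z.
Proof. intros h [h2| <-]; [exact (lt_trans x y z h h2) | exact h]. Qed.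

Lemma le_trans x y z : le O lt x y -> le O lt y z -> le O lt x z.
Proof. intros [h| <-] h2; [left; exact (lt_le_trans x y z h h2) | exact h2]. Qed.

Lemma le_lt_asym x y : le O lt x y -> lt y x -> False.
Proof. intros h h2. exact (lt_irrefl x (le_lt_trans x y x h h2)). Qed.

Lemma le_max x y : exists m, le O lt x m /\ le O lt y m /\ (m = x \/ m = y).
Proof.
  destruct (lt_trichotomy x y) as [h|[<-|h]].
  - exists y. split; [left|split; [right|]]; auto.
  - exists x. split; [right|split; [right|]]; auto.
  - exists x. split; [right|split; [left|]]; auto.
Qed.

Lemma cardinal_not_le_below a m :
  is_cardinal O lt a -> lt m a -> ~ card_le O (below O lt a) (below O lt m).
Proof.
  intros Ha Hm Hle. apply (Ha m Hm), equipotent_sym, equipotent_of_subset_card_le; auto.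
  intros x Hx. exact (lt_trans x m a Hx Hm).
Qed.

Lemma is_cf_le a k k' : is_cf O lt a k -> is_cf O lt a k' -> le O lt k k'.
Proof.
  intros [Hk [_ Hmin]] [_ [[X [HX HXk']] _]].
  apply le_of_not_lt. intro Hlt. apply (cardinal_not_le_below k k' Hk Hlt).
  apply (card_le_trans _ X); [apply Hmin; exact HX | apply equipotent_card_le; exact HXk'].
Qed.

Lemma equipotent_cofinal a Z :
  is_cardinal O lt a -> (forall x, Z x -> lt x a) ->
  equipotent O Z (below O lt a) -> cofinal_in O lt Z a.
Proof.
  intros Ha HZ HZa. split; [exact HZ|]. intros c Hc. apply NNPP. intro Hno.
  apply (cardinal_not_le_below a c Ha Hc). apply (card_le_trans _ Z).
  - apply equipotent_card_le, equipotent_sym. exact HZa.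
  - exists (fun x => x). split; [|auto]. intros x Zx. apply NNPP. intro Hnlt.
    apply Hno. exists x. split; [exact Zx | apply le_of_not_lt; exact Hnlt].
Qed.

Lemma not_is_sup_bounded S a :
  (forall x, S x -> lt x a) -> ~ is_sup O lt S a ->
  exists t, lt t a /\ forall x, S x -> le O lt x t.
Proof.
  intros HS Hns. apply NNPP. intro Hno. apply Hns. split.
  - intros x Hx. left. auto.
  - intros t Ht. apply le_of_not_lt. intro Hta. apply Hno. exists t. auto.
Qed.

Lemma no_max_of_cofinal_increasing (kappa lam : O) (ls : O -> O) :
  is_limit O lt lam ->
  (forall i j, lt i kappa -> lt j kappa -> lt i j -> lt (ls i) (ls j)) ->
  cofinal_in O lt (fun x => exists i, lt i kappa /\ x = ls i) lam ->
  forall x, lt x kappa -> exists y, lt x y /\ lt y kappa.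
Proof.
  intros [_ Hlim] Hinc [Hlt Hcof] x Hx.
  destruct (Hlim (ls x)) as [y [Hxy Hy]]; [apply Hlt; eauto|].
  destruct (Hcof y Hy) as [z [[i [Hi ->]] Hyi]].
  exists i. split; [|exact Hi].
  destruct (lt_trichotomy x i) as [h|[<-|h]]; [exact h| |]; exfalso.
  - exact (le_lt_asym y (ls x) Hyi Hxy).
  - exact (le_lt_asym y (ls i) Hyi (lt_trans _ _ _ (Hinc i x Hi Hx h) Hxy)).
Qed.

Lemma regular_bounded a m (h : O -> O) :
  regular_cardinal O lt a -> lt m a -> (forall x, lt x m -> lt (h x) a) ->
  exists s, lt s a /\ forall x, lt x m -> lt (h x) s.
Proof.
  intros [[Ha _] [_ [_ Hmin]]] Hm Hh. apply NNPP. intro Hno.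
  set (T := fun y => exists x, lt x m /\ h x = y).
  assert (HT : cofinal_in O lt T a).
  { split.
    - intros y [x [Hx <-]]. auto.
    - intros s Hs. apply NNPP. intro Hns. apply Hno. exists s. split; [exact Hs|].
      intros x Hx. apply NNPP. intro Hnlt. apply Hns.
      exists (h x). split; [exists x; auto | apply le_of_not_lt; exact Hnlt]. }
  destruct (choice (fun y x => T y -> lt x m /\ h x = y)) as [p Hp].
  { intro y. destruct (classic (T y)) as [[x Hx]|HnT]; [exists x | exists y]; tauto. }
  apply (cardinal_not_le_below a m Ha Hm). apply (card_le_trans _ T); [apply Hmin, HT|].
  exists p. split.
  - intros y Hy. apply (Hp y Hy).
  - intros y1 y2 H1 H2 E. destruct (Hp y1 H1) as [_ E1]. destruct (Hp y2 H2) as [_ E2].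
    rewrite <- E1, <- E2, E. reflexivity.
Qed.

Lemma regular_bounded2 a m (n : O -> O) (h : O -> O -> O) :
  regular_cardinal O lt a -> lt m a ->
  (forall x, lt x m -> lt (n x) a) ->
  (forall x y, lt x m -> lt y (n x) -> lt (h x y) a) ->
  exists s, lt s a /\ forall x y, lt x m -> lt y (n x) -> lt (h x y) s.
Proof.
  intros Ha Hm Hn Hh.
  destruct (choice (fun x s =>
              lt x m -> lt s a /\ forall y, lt y (n x) -> lt (h x y) s)) as [S HS].
  { intro x. destruct (classic (lt x m)) as [Hx|Hx]; [|exists x; tauto].
    destruct (regular_bounded a (n x) (h x) Ha (Hn x Hx)) as [s Hs]; [auto|].
    exists s. auto. }
  destruct (regular_bounded a m S Ha Hm) as [s [Hs Hbound]]; [intros x Hx; apply HS, Hx|].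
  exists s. split; [exact Hs|]. intros x y Hx Hy.
  apply (lt_trans _ (S x)); [apply HS | apply Hbound]; auto.
Qed.

Lemma exists_prod_above (kappa b : O) (ls : O -> O) (S : O -> O -> Prop) :
  (forall i, lt i kappa -> regular_cardinal O lt (ls i)) ->
  (forall i e, S i e -> lt e (ls i)) ->
  (forall i, lt i kappa -> le O lt b i -> ~ is_sup O lt (S i) (ls i)) ->
  exists g, in_prod O lt kappa ls g /\
    forall i e, lt i kappa -> le O lt b i -> S i e -> lt e (g i).
Proof.
  intros Hreg HS Hns.
  destruct (choice (fun i t =>
              lt i kappa -> lt t (ls i) /\ (le O lt b i -> forall e, S i e -> lt e t)))
    as [g Hg].
  { intro i. destruct (classic (lt i kappa)) as [Hi|Hi]; [|exists i; tauto].
    destruct (Hreg i Hi) as [[_ [[x Hx] Hlim]] _].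
    destruct (classic (le O lt b i)) as [Hbi|Hbi]; [|exists x; tauto].
    destruct (not_is_sup_bounded (S i) (ls i)) as [t [Ht Hbound]]; auto.
    destruct (Hlim t Ht) as [y [Hty Hy]].
    exists y. split; [exact Hy|]. intros _ e He. exact (le_lt_trans _ t _ (Hbound e He) Hty). }
  exists g. split.
  - intros i Hi. apply Hg, Hi.
  - intros i e Hi Hbi He. apply Hg; auto.
Qed.

Section LtStar.

Variable kappa : O.

Lemma lt_star_intro j g h :
  lt j kappa -> (forall i, lt i kappa -> le O lt j i -> lt (g i) (h i)) ->
  lt_star O lt kappa g h.
Proof.
  intros Hj Hgh. exists j. split; [exact Hj|]. intros i Hi Hle.
  apply NNPP. intro Hnlt. exact (le_lt_asym _ _ Hle (Hgh i Hi (le_of_not_lt _ _ Hnlt))).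
Qed.

Lemma lt_star_elim g h :
  lt_star O lt kappa g h ->
  exists j, lt j kappa /\ forall i, lt i kappa -> le O lt j i -> lt (g i) (h i).
Proof.
  intros [j [Hj Hbad]]. exists j. split; [exact Hj|]. intros i Hi Hji.
  apply NNPP. intro Hnlt. exact (le_lt_asym _ _ Hji (Hbad i Hi (le_of_not_lt _ _ Hnlt))).
Qed.

Lemma lt_star_trans g h l :
  lt_star O lt kappa g h -> lt_star O lt kappa h l -> lt_star O lt kappa g l.
Proof.
  intros Hgh Hhl.
  destruct (lt_star_elim g h Hgh) as [j1 [Hj1 H1]].
  destruct (lt_star_elim h l Hhl) as [j2 [Hj2 H2]].
  destruct (le_max j1 j2) as [j [Hj1j [Hj2j Hj]]].
  apply (lt_star_intro j); [destruct Hj as [-> | ->]; auto|].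
  intros i Hi Hji.
  apply (lt_trans _ (h i)); [apply H1 | apply H2]; eauto using le_trans.
Qed.

End LtStar.

Section Scale.

Variables (kappa lamp : O) (ls : O -> O) (f : O -> O -> O).

Hypothesis Hls_reg : forall i, lt i kappa -> regular_cardinal O lt (ls i).
Hypothesis Hls_inc :
  forall i j, lt i kappa -> lt j kappa -> lt i j -> lt (ls i) (ls j).
Hypothesis Hkappa_limit : forall x, lt x kappa -> exists y, lt x y /\ lt y kappa.
Hypothesis Hkappa_small : exists i0, lt i0 kappa /\ le O lt kappa (ls i0).
Hypothesis Hf_prod : forall a, lt a lamp -> in_prod O lt kappa ls (f a).
Hypothesis Hf_inc : forall a b, lt a lamp -> lt b lamp -> lt a b ->
  lt_star O lt kappa (f a) (f b).
Hypothesis Hf_unb : ~ exists g, in_prod O lt kappa ls g /\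
  forall a, lt a lamp -> lt_star O lt kappa (f a) g.

Lemma scale_lt_star_of_le a y G :
  lt y lamp -> le O lt a y -> lt_star O lt kappa (f y) G -> lt_star O lt kappa (f a) G.
Proof.
  intros Hy [Hay| <-] HG; [|exact HG].
  apply (lt_star_trans _ _ (f y)); [apply Hf_inc; eauto using lt_trans | exact HG].
Qed.

Lemma scale_length_nonempty : exists a, lt a lamp.
Proof.
  apply NNPP. intro Hempty. apply Hf_unb.
  destruct (choice (fun i x => lt i kappa -> lt x (ls i))) as [g Hg].
  { intro i. destruct (classic (lt i kappa)) as [Hi|Hi]; [|exists i; tauto].
    destruct (Hls_reg i Hi) as [[_ [[x Hx] _]] _]. exists x. auto. }
  exists g. split; [exact Hg|]. intros a Ha. exfalso. eauto.
Qed.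

Lemma scale_bounds_small_family (c : O -> O -> O) :
  (forall i e, lt i kappa -> lt e (ls i) -> lt (c i e) lamp) ->
  exists d, lt d lamp /\ forall i e, lt i kappa -> lt e (ls i) -> lt (c i e) d.
Proof.
  intro Hc. apply NNPP. intro Hno.
  assert (Hhit : forall a, lt a lamp ->
            exists i e, lt i kappa /\ lt e (ls i) /\ le O lt a (c i e)).
  { intros a Ha. apply NNPP. intro Hmiss. apply Hno. exists a. split; [exact Ha|].
    intros i e Hi He. apply NNPP. intro Hnlt. apply Hmiss.
    exists i, e. split; [|split]; auto. apply le_of_not_lt, Hnlt. }
  destruct Hkappa_small as [i0 [Hi0 Hkappa_i0]].
  destruct (choice (fun i s => lt i kappa -> lt s (ls i) /\
              (le O lt i0 i -> forall k e, lt k i -> lt e (ls k) -> lt (f (c k e) i) s)))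
    as [G HG].
  { intro i. destruct (classic (lt i kappa)) as [Hi|Hi]; [|exists i; tauto].
    destruct (classic (le O lt i0 i)) as [Hi0i|Hi0i].
    - assert (Hi_ls : lt i (ls i)).
      { apply (lt_le_trans _ _ _ Hi), (le_trans _ _ _ Hkappa_i0).
        destruct Hi0i as [Hlt| <-]; [left; apply Hls_inc|right]; auto. }
      destruct (regular_bounded2 (ls i) i ls (fun k e => f (c k e) i)) as [s [Hs Hbound]].
      + apply Hls_reg, Hi.
      + exact Hi_ls.
      + intros k Hk. apply Hls_inc; eauto using lt_trans.
      + intros k e Hk He. apply Hf_prod; [apply Hc|]; eauto using lt_trans.
      + exists s. auto.
    - destruct (Hls_reg i Hi) as [[_ [[x Hx] _]] _]. exists x. tauto. }
  apply Hf_unb. exists G. split; [intros i Hi; apply HG, Hi|].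
  intros a Ha. destruct (Hhit a Ha) as [k [e [Hk [He Hae]]]].
  apply (scale_lt_star_of_le a (c k e) G (Hc k e Hk He) Hae).
  destruct (le_max k i0) as [m [Hkm [Hi0m Hm]]].
  destruct (Hkappa_limit m) as [j [Hmj Hj]]; [destruct Hm as [-> | ->]; auto|].
  apply (lt_star_intro _ j); [exact Hj|]. intros i Hi Hji.
  apply (HG i Hi); auto.
  - left. exact (le_lt_trans _ _ _ Hi0m (lt_le_trans _ _ _ Hmj Hji)).
  - exact (le_lt_trans _ _ _ Hkm (lt_le_trans _ _ _ Hmj Hji)).
Qed.

Lemma scale_fiber_unbounded Z g b :
  cofinal_in O lt Z lamp -> in_prod O lt kappa ls g -> lt b kappa ->
  exists i e, lt i kappa /\ le O lt b i /\ le O lt (g i) e /\ lt e (ls i) /\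
    is_sup O lt (fun x => Z x /\ f x i = e) lamp.
Proof.
  intros [HZ HZcof] Hg Hb. apply NNPP. intro Hno.
  destruct scale_length_nonempty as [a0 Ha0].
  assert (Hc : forall i e, exists t, lt i kappa -> lt e (ls i) -> lt t lamp /\
            (le O lt b i -> le O lt (g i) e -> forall x, Z x -> f x i = e -> le O lt x t)).
  { intros i e.
    destruct (classic (lt i kappa /\ lt e (ls i) /\ le O lt b i /\ le O lt (g i) e))
      as [[Hi [He [Hbi Hge]]]|Hout].
    - destruct (not_is_sup_bounded (fun x => Z x /\ f x i = e) lamp) as [t [Ht Hbound]].
      + intros x [Zx _]. auto.
      + intro Hsup. apply Hno. exists i, e. auto.
      + exists t. intros _ _. split; [exact Ht|]. intros _ _ x Zx Hx. apply Hbound. auto.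
    - exists a0. intros Hi He. split; [exact Ha0|]. intros Hbi Hge. exfalso. auto. }
  destruct (choice (fun i C => forall e, lt i kappa -> lt e (ls i) ->
              lt (C e) lamp /\ (le O lt b i -> le O lt (g i) e ->
                forall x, Z x -> f x i = e -> le O lt x (C e)))) as [c Hcs].
  { intro i. exact (choice _ (Hc i)). }
  destruct (scale_bounds_small_family c) as [d [Hd Hcd]]; [intros i e Hi He; apply Hcs; auto|].
  apply Hf_unb. exists g. split; [exact Hg|]. intros a Ha.
  destruct (le_max a d) as [m [Ham [Hdm Hm]]].
  destruct (HZcof m) as [x [Zx Hmx]]; [destruct Hm as [-> | ->]; auto|].
  apply (scale_lt_star_of_le a x g (HZ x Zx) (le_trans _ _ _ Ham Hmx)).
  apply (lt_star_intro _ b _ _ Hb). intros i Hi Hbi. apply NNPP. intro Hnlt.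
  assert (Hxi : lt (f x i) (ls i)) by exact (Hf_prod x (HZ x Zx) i Hi).
  destruct (Hcs i (f x i) Hi Hxi) as [_ Hbound].
  apply (le_lt_asym x (c i (f x i))).
  - apply Hbound; auto. apply le_of_not_lt, Hnlt.
  - exact (lt_le_trans _ _ _ (Hcd i (f x i) Hi Hxi) (le_trans _ _ _ Hdm Hmx)).
Qed.

End Scale.

End Ordinals.

Theorem mainTheorem5
  (O : Type) (lt : O -> O -> Prop) (Hwo : is_well_order O lt)
  (lam kappa lamp : O) (ls : O -> O) (f : O -> O -> O)
  (Hsing : singular_cardinal O lt lam)
  (Hcf : is_cf O lt lam kappa)
  (Hsucc : is_succ_cardinal O lt lam lamp)
  (Hls_reg : forall i, lt i kappa -> regular_cardinal O lt (ls i))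
  (Hls_inc : forall i j, lt i kappa -> lt j kappa -> lt i j -> lt (ls i) (ls j))
  (Hls_cof : cofinal_in O lt (fun x => exists i, lt i kappa /\ x = ls i) lam)
  (Hf_prod : forall a, lt a lamp -> in_prod O lt kappa ls (f a))
  (Hf_inc : forall a b, lt a lamp -> lt b lamp -> lt a b ->
              lt_star O lt kappa (f a) (f b))
  (Hf_unb : ~ exists g, in_prod O lt kappa ls g /\
              forall a, lt a lamp -> lt_star O lt kappa (f a) g) :
  forall Z : O -> Prop,
    (forall b, Z b -> lt b lamp) ->
    equipotent O Z (below O lt lamp) ->
    cofinal_in O lt
      (fun i => lt i kappa /\
         is_sup O lt
           (fun e => lt e (ls i) /\
              is_sup O lt (fun b => Z b /\ f b i = e) lamp)
           (ls i))
      kappa.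
Proof.
  intros Z HZ HZeq.
  destruct Hsing as [[_ Hlam_limit] [k [Hcf_k Hk]]].
  destruct Hsucc as [Hlamp_card _].
  assert (Hkappa_lam : lt kappa lam)
    by exact (le_lt_trans O lt Hwo _ _ _ (is_cf_le O lt Hwo lam kappa k Hcf Hcf_k) Hk).
  assert (Hkappa_small : exists i0, lt i0 kappa /\ le O lt kappa (ls i0)).
  { destruct Hls_cof as [_ Hcof].
    destruct (Hcof kappa Hkappa_lam) as [x [[i0 [Hi0 ->]] Hle]]. eauto. }
  pose proof (no_max_of_cofinal_increasing O lt Hwo kappa lam ls Hlam_limit Hls_inc Hls_cof)
    as Hkappa_limit.
  pose proof (equipotent_cofinal O lt Hwo lamp Z Hlamp_card HZ HZeq) as HZcof.
  split; [intros i [Hi _]; exact Hi|]. intros b Hb. apply NNPP. intro Hno.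
  destruct (exists_prod_above O lt Hwo kappa b ls
              (fun i e => lt e (ls i) /\ is_sup O lt (fun x => Z x /\ f x i = e) lamp))
    as [g [Hg Hg_above]]; [exact Hls_reg | intros i e [He _]; exact He | |].
  { intros i Hi Hbi Hsup. apply Hno. exists i. auto. }
  destruct (scale_fiber_unbounded O lt Hwo kappa lamp ls f Hls_reg Hls_inc Hkappa_limit
              Hkappa_small Hf_prod Hf_inc Hf_unb Z g b HZcof Hg Hb)
    as [i [e [Hi [Hbi [Hge [He Hsup]]]]]].
  exact (le_lt_asym O lt Hwo _ _ Hge (Hg_above i e Hi Hbi (conj He Hsup))).
Qed.
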